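(* For every positive integer $T$ there exist a state (a graph $G=(V,E)$ with positive vertex populations), a number of districts $k$, positive weights $\Theta=(\theta(i,j))_{i,j\in V}$, and a probability distribution $\mathcal{D}$ over valid redistricting maps such that, letting $f(A)=\mathbb{E}_{A'\sim\mathcal{D}}[d_\Theta(A,A')]$ be the medoid cost, $A^*$ a population medoid (a minimizer of $f$ over valid maps), and $A_1,\dots,A_T$ i.i.d. samples from $\mathcal{D}$: (1) $\Pr\big[\min_{A\in\{A_1,\dots,A_T\}} d_\Theta(A,A^* )\ge 0.331\big]\ge\frac{2}{3}$, and (2) $\Pr\big[\min_{A\in\{A_1,\dots,A_T\}} f(A)\ge 1.1\, f(A^* )\big]\ge\frac{2}{3}$.
   Context: A redistricting map is a partition of $V$ into $k$ nonempty pairwise disjoint districts; a map is valid if its districts are contiguous in $G$, have approximately equal total population, and satisfy any other fixed validity constraints. Maps are identified with adjacency matrices $A$, $A(i,j)=1$ iff $i,j$ lie in the same district and $0$ otherwise. $d_\Theta(A_1,A_2)=\frac{1}{2}\sum_{i,j\in V}\theta(i,j)|A_1(i,j)-A_2(i,j)|$, summing over ordered pairs. *)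

From mathcomp Require Import all_boot all_order all_algebra.
From mathcomp Require Import reals.
Set Implicit Arguments. Unset Strict Implicit. Unset Printing Implicit Defensive.
Import Order.TTheory GRing.Theory Num.Theory.
Local Open Scope ring_scope.

(* A redistricting map on vertex set V is a partition of V (a set of
   pairwise disjoint nonempty blocks covering V), represented as
   {set {set V}}; blocks are the districts. *)

Section Redistricting.
Variables (R : realType) (V : finType).

Definition simple_graph (G : rel V) : Prop :=
  (forall x y, G x y = G y x) /\ (forall x, ~~ G x x).

Definition contiguous (G : rel V) (B : {set V}) : Prop :=
  forall x y, x \in B -> y \in B ->
    connect [rel a b | [&& G a b, a \in B & b \in B]] x y.

Definition district_pop (pop : V -> R) (B : {set V}) : R :=
  \sum_(v in B) pop v.

Definition total_pop (pop : V -> R) : R := \sum_(v : V) pop v.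

Definition valid_map (G : rel V) (pop : V -> R) (k : nat) (eps : R)
  (P : {set {set V}}) : Prop :=
  [/\ partition P [set: V], #|P| = k,
      (forall B, B \in P -> contiguous G B) &
      (forall B, B \in P ->
         `|district_pop pop B - total_pop pop / k%:R|
           <= eps * (total_pop pop / k%:R))].

(* adjacency matrix: A(i,j) = 1 iff i and j lie in the same district *)
Definition adj (P : {set {set V}}) (i j : V) : bool := i \in pblock P j.

Definition dTheta (theta : V -> V -> R) (P1 P2 : {set {set V}}) : R :=
  2^-1 * \sum_(i : V) \sum_(j : V)
     theta i j * `|(adj P1 i j)%:R - (adj P2 i j)%:R|.

Definition distribution_on (valid : {set {set V}} -> Prop)
  (D : {set {set V}} -> R) : Prop :=
  [/\ forall P, 0 <= D P,
      \sum_(P : {set {set V}}) D P = 1 &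
      forall P, 0 < D P -> valid P].

Definition medoid_cost (theta : V -> V -> R) (D : {set {set V}} -> R)
  (A : {set {set V}}) : R :=
  \sum_(P : {set {set V}}) D P * dTheta theta A P.

Definition iid_prob (T : nat) (D : {set {set V}} -> R)
  (E : {ffun 'I_T -> {set {set V}}} -> bool) : R :=
  \sum_(s : {ffun 'I_T -> {set {set V}}})
     (\prod_(t < T) D (s t)) * (E s)%:R.

End Redistricting.

From mathcomp Require Import all_boot all_order all_algebra.
From mathcomp Require Import reals lra.
Import Order.TTheory GRing.Theory Num.Theory.
Local Open Scope ring_scope.
Set Implicit Arguments. Unset Strict Implicit. Unset Printing Implicit Defensive.

(* Take the complete graph on a hub 0 and three spokes 1, 2, 3, with two
   districts and a population tolerance of 100%, so that every split into two
   nonempty parts is valid; pairs involving the hub weigh 10, the others 1.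
   D is uniform on the three maps pairing the hub with one spoke.  These are
   pairwise at distance 22, while the map isolating the hub is at distance 12
   from each of them, so a medoid A* costs at most 12.  By the triangle
   inequality through A*, every support map is then at distance at least
   2 * 22 - 3 * 12 = 8 from A*, and costs 44/3 > 1.1 * 12 itself.  Both events
   thus hold for every sample, i.e. with probability 1. *)

Section DThetaPseudometric.
Variables (R : realType) (V : finType) (theta : V -> V -> R).

Lemma dThetaC P Q : dTheta theta P Q = dTheta theta Q P.
Proof.
congr (_ * _); apply: eq_bigr => i _; apply: eq_bigr => j _.
by rewrite distrC.
Qed.

Lemma dThetaxx P : dTheta theta P P = 0.
Proof.
rewrite /dTheta big1 ?mulr0 // => i _; rewrite big1 // => j _.
by rewrite subrr normr0 mulr0.
Qed.

Hypothesis theta_ge0 : forall i j, 0 <= theta i j.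

Lemma dTheta_triangle P A Q :
  dTheta theta P Q <= dTheta theta P A + dTheta theta A Q.
Proof.
rewrite /dTheta -mulrDr ler_wpM2l ?invr_ge0 ?ler0n //.
rewrite -big_split ler_sum // => i _; rewrite -big_split ler_sum // => j _.
by rewrite /= -mulrDr ler_wpM2l // (le_trans _ (ler_normD _ _)) // addrA subrK.
Qed.

End DThetaPseudometric.

Section Bipartition.
Variables (V : finType) (f : pred V).

Definition bipartition : {set {set V}} := [set [set x | f x]; [set x | ~~ f x]].

Lemma trivIset_bipartition : trivIset bipartition.
Proof.
apply/trivIsetP => A B /set2P[]-> /set2P[]->; rewrite ?eqxx // => _.
  by rewrite -setI_eq0; apply/eqP/setP => x; rewrite !inE; case: (f x).
by rewrite -setI_eq0; apply/eqP/setP => x; rewrite !inE; case: (f x).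
Qed.

Lemma adj_bipartition i j : adj bipartition i j = (f i == f j).
Proof.
rewrite /adj; case fj: (f j).
  by rewrite (@def_pblock _ _ [set x | f x]) ?trivIset_bipartition ?set21 ?inE ?fj.
by rewrite (@def_pblock _ _ [set x | ~~ f x]) ?trivIset_bipartition ?set22 ?inE ?fj.
Qed.

Variables (a b : V).
Hypotheses (fa : f a) (fb : ~~ f b).

Lemma partition_bipartition : partition bipartition [set: V].
Proof.
apply/and3P; split; last 2 first.
- exact: trivIset_bipartition.
- apply/negP => /set2P[] /setP; [move/(_ a) | move/(_ b)]; by rewrite !inE ?fa ?fb.
apply/eqP/setP => x; rewrite inE; apply/bigcupP.
case fx: (f x); [exists [set x | f x] | exists [set x | ~~ f x]];
  by rewrite ?set21 ?set22 ?inE ?fx.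
Qed.

Lemma card_bipartition : #|bipartition| = 2.
Proof.
rewrite cards2; suff -> : [set x | f x] != [set x | ~~ f x] by [].
by apply/eqP => /setP/(_ a); rewrite !inE fa.
Qed.

End Bipartition.

Definition mismatch_weight (V : finType) (w : V -> V -> nat) (f g : pred V) : nat :=
  \sum_i \sum_j w i j * ((f i == f j) != (g i == g j)).

Lemma dTheta_bipartition (R : realType) (V : finType) (w : V -> V -> nat) f g :
  dTheta (fun i j => (w i j)%:R : R) (bipartition f) (bipartition g)
  = 2^-1 * (mismatch_weight w f g)%:R.
Proof.
rewrite /dTheta /mismatch_weight natr_sum; congr (_ * _); apply: eq_bigr => i _.
rewrite natr_sum; apply: eq_bigr => j _; rewrite !adj_bipartition natrM.
by case: (f i == f j); case: (g i == g j);
  rewrite ?subrr ?subr0 ?sub0r ?normrN ?normr0 ?normr1.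
Qed.

Definition complete_graph {V : finType} : rel V := fun x y => x != y.

Section CompleteGraph.
Variables (R : realType) (V : finType).

Lemma simple_complete_graph : simple_graph (@complete_graph V).
Proof. by split=> [x y|x]; rewrite /complete_graph ?eqxx // eq_sym. Qed.

Lemma contiguous_complete_graph (B : {set V}) : contiguous complete_graph B.
Proof.
move=> x y xB yB; have [->|nxy] := eqVneq x y; first exact: connect0.
by apply: connect1; rewrite /= /complete_graph nxy xB yB.
Qed.

Lemma valid_map_complete_graph P : partition P [set: V] -> #|P| = 2 ->
  valid_map complete_graph (fun=> 1 : R) 2 1 P.
Proof.
move=> partP cardP; split=> // [B _|B _]; first exact: contiguous_complete_graph.
rewrite /district_pop /total_pop !sumr_const mul1r.
have : (#|B| <= #|V|)%N by exact: max_card.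
rewrite -(ler_nat R) => leBV.
have B_ge0 : (0 : R) <= #|B|%:R by rewrite ler0n.
rewrite ler_norml; apply/andP; split; lra.
Qed.

Lemma valid_bipartition (f : pred V) a b : f a -> ~~ f b ->
  valid_map complete_graph (fun=> 1 : R) 2 1 (bipartition f).
Proof.
move=> fa fb; apply: valid_map_complete_graph.
  exact: partition_bipartition fa fb.
exact: card_bipartition fa.
Qed.

End CompleteGraph.

Section Uniform.
Variables (R : realType) (X : finType) (S : {set X}).

Definition uniform (x : X) : R := if x \in S then #|S|%:R^-1 else 0.

Lemma sum_uniform_mul (g : X -> R) :
  \sum_x uniform x * g x = #|S|%:R^-1 * \sum_(x in S) g x.
Proof.
rewrite (bigID (mem S)) /= [X in _ + X]big1 ?addr0 => [|x /negbTE xS]; last first.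
  by rewrite /uniform xS mul0r.
by rewrite mulr_sumr; apply: eq_bigr => x xS; rewrite /uniform xS.
Qed.

End Uniform.

Lemma uniform_distribution (R : realType) (V : finType) (S : {set {set {set V}}})
    (valid : {set {set V}} -> Prop) :
  S != set0 -> {in S, forall P, valid P} -> distribution_on valid (uniform R S).
Proof.
move=> S_neq0 S_valid; split=> [P||P].
- by rewrite /uniform; case: ifP; rewrite ?invr_ge0 ?ler0n.
- under eq_bigr => P _ do rewrite -[uniform R S P]mulr1.
  by rewrite sum_uniform_mul sumr_const mulVf // pnatr_eq0 -lt0n card_gt0.
- by rewrite /uniform; case: ifP => [PS _|_]; [exact: S_valid | rewrite ltxx].
Qed.

Lemma medoid_cost_uniform (R : realType) (V : finType) (theta : V -> V -> R)
    (S : {set {set {set V}}}) A :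
  medoid_cost theta (uniform R S) A = #|S|%:R^-1 * \sum_(P in S) dTheta theta P A.
Proof. by rewrite /medoid_cost sum_uniform_mul; under eq_bigr do rewrite dThetaC. Qed.

Lemma iid_prob_supported_event (R : realType) (V : finType) (T : nat)
    (D : {set {set V}} -> R) (E : {ffun 'I_T -> {set {set V}}} -> bool) :
  \sum_P D P = 1 -> (forall s : {ffun _}, (forall t, D (s t) != 0) -> E s) ->
  iid_prob D E = 1.
Proof.
move=> D_sum1 D_E; rewrite /iid_prob.
rewrite (eq_bigr (fun s : {ffun 'I_T -> _} => \prod_(t < T) D (s t))) => [|s _].
  by rewrite -(bigA_distr_bigA (fun _ P => D P)) big1.
have [_|not_E] := boolP (E s); first by rewrite mulr1.
have /forallPn[t /negPn/eqP Dst0] : ~~ [forall t, D (s t) != 0].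
  by apply: contra not_E => /forallP; exact: D_E.
by rewrite mulr0 (bigD1 t) //= Dst0 mul0r.
Qed.

Definition hub_weight (i j : 'I_4) : nat := if (i == 0) || (j == 0) then 10 else 1.

Definition pairing_with (k i : 'I_4) : bool := (i == 0) || (i == k).

Lemma mismatch_weight_pairings j k : j != 0 -> k != 0 -> j != k ->
  mismatch_weight hub_weight (pairing_with j) (pairing_with k) = 44%N.
Proof.
case: j => [[|[|[|[|j]]]] //] ?; case: k => [[|[|[|[|k]]]] //] ? _ _ _;
  by rewrite /mismatch_weight !big_ord_recr !big_ord0.
Qed.

Lemma mismatch_weight_hub_pairing k : k != 0 ->
  mismatch_weight hub_weight (pred1 0) (pairing_with k) = 24%N.
Proof.
by case: k => [[|[|[|[|k]]]] //] ? _; rewrite /mismatch_weight !big_ord_recr !big_ord0.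
Qed.

Section HubExample.
Context {R : realType}.

Definition hub_theta (i j : 'I_4) : R := (hub_weight i j)%:R.
Definition pairing (k : 'I_4) : {set {set 'I_4}} := bipartition (pairing_with k).
Definition hub_alone : {set {set 'I_4}} := bipartition (pred1 0).
Definition pairings : {set {set {set 'I_4}}} :=
  [set pairing 1; pairing 2; pairing 3].

Lemma mem_pairings P :
  (P \in pairings) = [|| P == pairing 1, P == pairing 2 | P == pairing 3].
Proof. by rewrite !inE -orbA. Qed.

Lemma dTheta_pairings j k : j != 0 -> k != 0 -> j != k ->
  dTheta hub_theta (pairing j) (pairing k) = 22%:R.
Proof.
by move=> j0 k0 jk; rewrite dTheta_bipartition mismatch_weight_pairings //; lra.
Qed.

Lemma dTheta_hub_alone_pairing k : k != 0 ->
  dTheta hub_theta hub_alone (pairing k) = 12%:R.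
Proof.
by move=> k0; rewrite dTheta_bipartition mismatch_weight_hub_pairing //; lra.
Qed.

Lemma valid_pairing k : valid_map complete_graph (fun=> 1 : R) 2 1 (pairing k).
Proof.
have [b kb] : exists b, ~~ pairing_with k b.
  by case: k => [[|[|[|[|k]]]] //] ?; [exists 1 | exists 2 | exists 1 | exists 1].
exact: valid_bipartition (_ : pairing_with k 0) kb.
Qed.

Lemma valid_hub_alone : valid_map complete_graph (fun=> 1 : R) 2 1 hub_alone.
Proof. exact: (@valid_bipartition R _ _ 0 1). Qed.

Lemma medoid_cost_uniform_pairings A :
  medoid_cost hub_theta (uniform R pairings) A =
  3^-1 * (dTheta hub_theta (pairing 1) A + dTheta hub_theta (pairing 2) A
          + dTheta hub_theta (pairing 3) A).
Proof.
have neq_pairings j k : j != 0 -> k != 0 -> j != k -> pairing j != pairing k.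
  move=> j0 k0 jk; apply/eqP => ejk.
  by have := dTheta_pairings j0 k0 jk; rewrite ejk dThetaxx; lra.
have p12 : pairing 1 != pairing 2 by exact: neq_pairings.
have p13 : pairing 1 != pairing 3 by exact: neq_pairings.
have p23 : pairing 2 != pairing 3 by exact: neq_pairings.
have notin1 : pairing 1 \notin [set pairing 2; pairing 3] by rewrite !inE negb_or p12.
have notin2 : pairing 2 \notin [set pairing 3] by rewrite inE.
rewrite medoid_cost_uniform /pairings -setUA -/([set pairing 2; pairing 3]).
by rewrite cardsU1 notin1 cards2 p23 big_setU1 //= big_setU1 //= big_set1 addrA.
Qed.

Lemma medoid_cost_hub_alone :
  medoid_cost hub_theta (uniform R pairings) hub_alone = 12%:R.
Proof.
rewrite medoid_cost_uniform_pairings !(dThetaC _ _ hub_alone).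
by rewrite !dTheta_hub_alone_pairing //; lra.
Qed.

Lemma medoid_cost_pairing P : P \in pairings ->
  medoid_cost hub_theta (uniform R pairings) P = 44%:R / 3%:R.
Proof.
rewrite medoid_cost_uniform_pairings mem_pairings => /or3P[]/eqP->;
  by rewrite dThetaxx !dTheta_pairings //; lra.
Qed.

Lemma dTheta_pairing_ge A P : P \in pairings ->
  medoid_cost hub_theta (uniform R pairings) A <= 12%:R ->
  8%:R <= dTheta hub_theta P A.
Proof.
have theta_ge0 i j : 0 <= hub_theta i j by exact: ler0n.
have tri j k : j != 0 -> k != 0 -> j != k ->
    22%:R <= dTheta hub_theta (pairing j) A + dTheta hub_theta (pairing k) A.
  move=> j0 k0 jk; rewrite -(dTheta_pairings j0 k0 jk) [X in _ <= _ + X]dThetaC.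
  exact: dTheta_triangle.
have t12 := tri 1 2 isT isT isT; have t13 := tri 1 3 isT isT isT.
have t23 := tri 2 3 isT isT isT.
rewrite medoid_cost_uniform_pairings mem_pairings => /or3P[]/eqP-> ?; lra.
Qed.

End HubExample.

Theorem theorem3 (R : realType) (T : nat) (hT : (0 < T)%N) :
  exists (V : finType) (G : rel V) (pop : V -> R) (k : nat) (eps : R)
         (theta : V -> V -> R) (D : {set {set V}} -> R),
    [/\ simple_graph G /\ (forall v, 0 < pop v),
        0 <= eps,
        (forall i j, 0 < theta i j),
        distribution_on (valid_map G pop k eps) D &
        forall Astar : {set {set V}},
          valid_map G pop k eps Astar ->
          (forall A, valid_map G pop k eps A ->
             medoid_cost theta D Astar <= medoid_cost theta D A) ->
          iid_prob D (fun s => [forall t : 'I_T,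
              331%:R / 1000%:R <= dTheta theta (s t) Astar])
            >= 2%:R / 3%:R
          /\
          iid_prob D (fun s => [forall t : 'I_T,
              (11%:R / 10%:R) * medoid_cost theta D Astar
                <= medoid_cost theta D (s t)])
            >= 2%:R / 3%:R].
Proof.
have D_dist :
    distribution_on (valid_map complete_graph (fun=> 1 : R) 2 1) (uniform R pairings).
  apply: uniform_distribution => [|P].
    by apply/set0Pn; exists (pairing 1); rewrite mem_pairings eqxx.
  by rewrite mem_pairings => /or3P[]/eqP->; exact: valid_pairing.
have [_ D_sum1 _] := D_dist.
exists 'I_4, complete_graph, (fun=> 1), 2%N, 1, (@hub_theta R), (uniform R pairings).
split=> //; first by split=> [|_]; [exact: simple_complete_graph | exact: ltr01].
  by move=> i j; rewrite ltr0n /hub_weight; case: ifP.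
move=> A _ A_min.
have := A_min _ valid_hub_alone; rewrite medoid_cost_hub_alone => cost_A.
have supp_pairings P : uniform R pairings P != 0 -> P \in pairings.
  by rewrite /uniform; case: ifP => // _; rewrite eqxx.
split; rewrite iid_prob_supported_event // => [|s s_supp]; try lra;
  apply/forallP => t; have P_in := supp_pairings _ (s_supp t).
  by apply: le_trans (dTheta_pairing_ge P_in cost_A); lra.
by rewrite (medoid_cost_pairing P_in); lra.
Qed.
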